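(* Let $S$ be a measurement scenario and $g\colon S\to\mathbf 2$ a possibilistic predicate such that at least one possibilistic empirical model on $S$ satisfies $g$. Then there is a possibilistic empirical model $e$ on $S$ such that $g$ is equivalent to $g(e)$, i.e. for every possibilistic empirical model $d$ on $S$: $d$ satisfies $g$ if and only if $d$ satisfies $g(e)$ (equivalently, if and only if $d\le e$).
   Context: Measurement scenarios, $\mathcal E_S(U)=\prod_{x\in U}O_{S,x}$, possibilistic empirical models (families of non-empty subsets $e_\sigma\subseteq\mathcal E_S(\sigma)$, $\sigma\in\Sigma_S$, with $e_\tau=\{s|_\tau:s\in e_\sigma\}$ for $\tau\subseteq\sigma$), their order $d\le e$ iff $d_\sigma\subseteq e_\sigma$ for all $\sigma$, deterministic procedures $f=(\pi_f,\alpha_f)$ (a simplicial relation $\pi_f$ from $\Sigma_T$ to $\Sigma_S$ and maps $\alpha_{f,x}\colon\mathcal E_S(\pi_f(x))\to O_{T,x}$), possibilistic procedures $\bigvee_if_i$ (non-empty finite sets of deterministic procedures) and their action $\mathrm{Emp}_{\mathbb B}$ are as follows: for deterministic $f$, $(\mathrm{Emp}_{\mathbb B}(f)e)_\sigma=\{(\alpha_{f,x}(s|_{\pi_f(x)}))_{x\in\sigma}: s\in e_{\pi_f(\sigma)}\}$, and $\mathrm{Emp}_{\mathbb B}(\bigvee_if_i)e$ is the contextwise union of the $\mathrm{Emp}_{\mathbb B}(f_i)e$. The scenario $\mathbf 2$ has a single measurement $*$ with outcomes $\{0,1\}$. A possibilistic predicate on $S$ is a possibilistic procedure $g\colon S\to\mathbf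 2$; a possibilistic model $e$ satisfies $g$ if $(\mathrm{Emp}_{\mathbb B}(g)e)_{\{*\}}=\{1\}$. Given a possibilistic model $e$ on $S$, the induced predicate is $g(e)=\bigvee_{\sigma\in\Sigma_S}g(e)_\sigma$, where $g(e)_\sigma$ is the deterministic procedure with $\pi( * )=\sigma$ and $\alpha_*\colon\mathcal E_S(\sigma)\to\{0,1\}$ the characteristic function of $e_\sigma$. *)

From HB Require Import structures.
From mathcomp Require Import all_boot.
From Stdlib Require List.
Set Implicit Arguments. Unset Strict Implicit. Unset Printing Implicit Defensive.

Record scenario := Scenario {
  meas : finType;
  outc : meas -> finType;
  faces : {set {set meas}}
}.

Definition is_scenario (S : scenario) : Prop :=
  (forall sigma tau : {set meas S},
      sigma \in faces S -> tau \subset sigma -> tau \in faces S) /\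
  (forall x : meas S, [set x] \in faces S).

(* Partial sections: an element of E_S(U) is encoded as a dependent function
   that is defined (Some) exactly on U. *)
Definition sect (S : scenario) := {dffun forall x : meas S, option (@outc S x)}.

Definition E (S : scenario) (U : {set meas S}) : {set sect S} :=
  [set s : sect S | [forall x, (s x != None) == (x \in U)]].

Definition restr (S : scenario) (U : {set meas S}) (s : sect S) : sect S :=
  @finfun _ (fun x => option (@outc S x)) (fun x => if x \in U then s x else None).

Definition model (S : scenario) := {set meas S} -> {set sect S}.

Definition is_model (S : scenario) (e : model S) : Prop :=
  forall sigma, sigma \in faces S ->
    [/\ e sigma != set0, e sigma \subset E sigma &
        forall tau : {set meas S}, tau \subset sigma -> e tau = restr tau @: e sigma].

Definition le_model (S : scenario) (d e : model S) : Prop :=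
  forall sigma, sigma \in faces S -> d sigma \subset e sigma.

(* deterministic procedures f : S -> T  (pi_f given by x |-> pi_f(x)) *)
Record dproc (S T : scenario) := DProc {
  dpi : meas T -> {set meas S};
  dalpha : forall x : meas T, sect S -> @outc T x
}.

Definition pimg (S T : scenario) (f : dproc S T) (sigma : {set meas T})
  : {set meas S} := \bigcup_(x in sigma) dpi f x.

Definition is_dproc (S T : scenario) (f : dproc S T) : Prop :=
  forall sigma, sigma \in faces T -> pimg f sigma \in faces S.

Definition empD (S T : scenario) (f : dproc S T) (e : model S) : model T :=
  fun sigma =>
    [set (@finfun _ (fun x => option (@outc T x))
            (fun x => if x \in sigma then Some (dalpha f x (restr (dpi f x) s))
                      else None) : sect T) | s in e (pimg f sigma)].

Definition is_pproc (S T : scenario) (g : seq (dproc S T)) : Prop :=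
  g <> [::] /\ (forall f, List.In f g -> is_dproc f).

Definition empP (S T : scenario) (g : seq (dproc S T)) (e : model S) : model T :=
  fun sigma => \bigcup_(f <- g) empD f e sigma.

(* the scenario 2: one measurement with outcomes {0,1} (0 = false, 1 = true) *)
Definition two : scenario :=
  @Scenario unit (fun _ => bool) [set set0; setT].

Definition one_sect : sect two :=
  @finfun _ (fun x : meas two => option (@outc two x)) (fun _ => Some true).

Definition satisfies (S : scenario) (g : seq (dproc S two)) (d : model S) : Prop :=
  empP g d [set tt] = [set one_sect].

Definition g_of (S : scenario) (e : model S) : seq (dproc S two) :=
  [seq @DProc S two (fun _ => sigma) (fun _ s => s \in e sigma)
  | sigma <- enum (faces S)].

From mathcomp Require Import all_boot.
From Stdlib Require Import ClassicalEpsilon.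
Set Implicit Arguments. Unset Strict Implicit.

(* On the scenario 2 there is a single context {*}, so a
   possibilistic predicate g = \/_i f_i is satisfied by a model d exactly when
   every branch f_i outputs 1 on every section of d over the context
   pi_{f_i}( * ) (lemma [satisfiesP]; nonemptiness of the models makes the
   union of the branch outputs equal to {1} rather than empty).
   This condition is inherited by every model below a satisfying one, so the
   contextwise union e of all models satisfying g -- a model as soon as one
   satisfying model exists ([union_is_model]) -- is the greatest one, and
   d satisfies g iff d <= e ([satisfies_iff_le_union]).  Finally, for the
   induced predicate g(e) the branch indexed by a face sigma outputs 1 on s
   iff s is in e_sigma, so d satisfies g(e) iff d <= e as well
   ([satisfies_g_of]); the theorem combines the two equivalences. *)

(* Classical decision of a proposition, used to define the greatest model as
   a finite set by comprehension. *)
Definition decide (P : Prop) : bool :=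
  if excluded_middle_informative P then true else false.

Lemma decideP (P : Prop) : reflect P (decide P).
Proof. by rewrite /decide; case: excluded_middle_informative => h; constructor. Qed.

(* Membership in a mapped sequence, stated with the [List.In] used by
   [is_pproc] (the mapped elements need not have decidable equality). *)
Lemma In_mapP (A : eqType) (B : Type) (F : A -> B) (l : seq A) (y : B) :
  List.In y (map F l) <-> exists2 x, x \in l & y = F x.
Proof.
elim: l => [|a l IH] /=; first by split=> // -[].
split=> [[<-|/IH [x xl ->]]|[x]]; first by exists a; rewrite ?mem_head.
- by exists x; rewrite // in_cons xl orbT.
- rewrite in_cons => /orP [/eqP -> ->|xl y_Fx]; first by left.
  by right; apply/IH; exists x.
Qed.

Lemma restr_id (S : scenario) (sigma : {set meas S}) (s : sect S) :
  s \in E sigma -> restr sigma s = s.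
Proof.
rewrite inE => /forallP supp; apply/ffunP => x; rewrite ffunE.
by case: ifP => // xNsigma; move: (supp x); rewrite xNsigma; case: (s x).
Qed.

Lemma two_face : [set tt] \in faces two.
Proof.
have -> : [set tt] = [set: unit] by apply/setP => -[]; rewrite !inE.
by rewrite /= !inE eqxx orbT.
Qed.

Section PredicatesOnScenario.
Variable S : scenario.

Lemma pimg_two (f : dproc S two) : pimg f [set tt] = dpi f tt.
Proof. by rewrite /pimg big_set1. Qed.

Definition branch_out (f : dproc S two) (s : sect S) : sect two :=
  @finfun _ (fun x => option (@outc two x))
    (fun x => if x \in [set tt] then Some (dalpha f x (restr (dpi f x) s)) else None).

Lemma branch_outE (f : dproc S two) (d : model S) :
  empD f d [set tt] = [set branch_out f s | s in d (dpi f tt)].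
Proof. by rewrite /empD pimg_two. Qed.

Lemma branch_out_one (f : dproc S two) (s : sect S) :
  (branch_out f s == one_sect) = dalpha f tt (restr (dpi f tt) s).
Proof.
apply/eqP/idP => [|ftrue].
- by move/(congr1 (fun h : sect two => h tt)); rewrite !ffunE inE eqxx => -[].
- by apply/ffunP => -[]; rewrite !ffunE inE eqxx ftrue.
Qed.

Definition accepts (h : seq (dproc S two)) (d : model S) : Prop :=
  forall f, List.In f h -> forall s, s \in d (dpi f tt) -> dalpha f tt (restr (dpi f tt) s).

Lemma outputs_sub_one (h : seq (dproc S two)) (d : model S) :
  empP h d [set tt] \subset [set one_sect] <-> accepts h d.
Proof.
rewrite /empP; elim: h => [|f h IH].
  by rewrite big_nil sub0set; split=> // _ f [].
rewrite big_cons subUset branch_outE; split.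
- case/andP => /subsetP f_one /IH h_acc g [<-|gh]; last exact: h_acc.
  by move=> s sd; rewrite -branch_out_one -in_set1; apply/f_one/imset_f.
- move=> acc; apply/andP; split; last by apply/IH => g gh; apply: acc; right.
  apply/subsetP => _ /imsetP [s sd ->].
  by rewrite inE branch_out_one; apply: acc => //; left.
Qed.

Lemma satisfiesP (h : seq (dproc S two)) (d : model S) :
  h <> [::] -> (forall f, List.In f h -> d (dpi f tt) != set0) ->
  satisfies h d <-> accepts h d.
Proof.
move=> h_nil d_nz; rewrite /satisfies -outputs_sub_one.
split=> [-> //|acc]; apply/eqP; rewrite eqEsubset acc sub1set /empP.
case: h h_nil d_nz acc => [//|f h] _ d_nz /outputs_sub_one acc.
case/set0Pn: (d_nz f (or_introl erefl)) => s sd.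
rewrite big_cons inE branch_outE; apply/orP; left.
rewrite -(eqP (_ : branch_out f s == one_sect)); first exact: imset_f.
by rewrite branch_out_one; apply: acc => //; left.
Qed.

Definition union_model (P : model S -> Prop) : model S :=
  fun sigma => [set s | decide (exists d, [/\ is_model d, P d & s \in d sigma])].

Lemma union_modelP (P : model S -> Prop) sigma s :
  reflect (exists d, [/\ is_model d, P d & s \in d sigma]) (s \in union_model P sigma).
Proof. by rewrite inE; apply: decideP. Qed.

Lemma union_is_model (P : model S -> Prop) :
  (exists d, is_model d /\ P d) -> is_model (union_model P).
Proof.
move=> [d0 [d0_model Pd0]] sigma sigma_face; split.
- case: (d0_model _ sigma_face) => /set0Pn [s sd0] _ _.
  by apply/set0Pn; exists s; apply/union_modelP; exists d0.
- apply/subsetP => s /union_modelP [d [d_model _ sd]].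
  by case: (d_model _ sigma_face) => _ /subsetP dE _; apply: dE.
- move=> tau tau_sub; apply/setP => s; apply/union_modelP/imsetP.
  + move=> [d [d_model Pd]]; case: (d_model _ sigma_face) => _ _ /(_ _ tau_sub) ->.
    by case/imsetP => t td ->; exists t => //; apply/union_modelP; exists d.
  + move=> [t /union_modelP [d [d_model Pd td]] ->]; exists d; split => //.
    by case: (d_model _ sigma_face) => _ _ /(_ _ tau_sub) ->; apply: imset_f.
Qed.

(* For a predicate g, a model satisfies g iff it lies below the union of all
   models satisfying g: acceptance passes to smaller models. *)
Lemma satisfies_iff_le_union (g : seq (dproc S two)) (d : model S) :
  is_pproc g -> is_model d ->
  satisfies g d <-> le_model d (union_model (satisfies g)).
Proof.
move=> [g_nil g_proc] d_model.
have g_face f : List.In f g -> dpi f tt \in faces S.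
  by move=> fg; rewrite -pimg_two; apply: g_proc two_face.
have nonempty (d' : model S) : is_model d' -> forall f, List.In f g -> d' (dpi f tt) != set0.
  by move=> d'_model f fg; case: (d'_model _ (g_face f fg)).
split=> [d_sat sigma _|d_le].
- by apply/subsetP => s sd; apply/union_modelP; exists d.
- apply/(satisfiesP g_nil (nonempty d d_model)) => f fg s sd.
  have /union_modelP [d' [d'_model d'_sat sd']] := subsetP (d_le _ (g_face f fg)) s sd.
  by move: d'_sat => /(satisfiesP g_nil (nonempty d' d'_model)); apply.
Qed.

Lemma satisfies_g_of (e d : model S) :
  faces S != set0 -> is_model d -> satisfies (g_of e) d <-> le_model d e.
Proof.
move=> /set0Pn [sigma0 sigma0_face] d_model.
pose branch sigma := @DProc S two (fun _ => sigma) (fun _ s => s \in e sigma).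
have branchP f : List.In f (g_of e) <-> exists2 sigma, sigma \in faces S & f = branch sigma.
  rewrite /g_of In_mapP; split=> -[sigma sigma_face ->]; exists sigma => //.
  - by rewrite -mem_enum.
  - by rewrite mem_enum.
have g_nil : g_of e <> [::].
  move=> g_empty; have := proj2 (branchP (branch sigma0)).
  by rewrite g_empty; apply; exists sigma0.
have d_nz f : List.In f (g_of e) -> d (dpi f tt) != set0.
  by case/branchP => sigma sigma_face ->; case: (d_model _ sigma_face).
have restr_d sigma s : sigma \in faces S -> s \in d sigma -> restr sigma s = s.
  by move=> sigma_face; case: (d_model _ sigma_face) => _ /subsetP dE _ /dE; apply: restr_id.
rewrite (satisfiesP g_nil d_nz); split=> [acc sigma sigma_face|d_le f].
- apply/subsetP => s sd; rewrite -(restr_d sigma s) //.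
  by apply: (acc (branch sigma)) => //; apply/branchP; exists sigma.
- case/branchP => sigma sigma_face -> s /= sd.
  by rewrite restr_d //; apply: (subsetP (d_le _ sigma_face)).
Qed.

End PredicatesOnScenario.

Theorem mainTheorem3 (S : scenario) (g : seq (dproc S two)) :
  is_scenario S -> is_pproc g ->
  (exists d : model S, is_model d /\ satisfies g d) ->
  exists e : model S, is_model e /\
    forall d : model S, is_model d ->
      (satisfies g d <-> satisfies (g_of e) d) /\
      (satisfies g d <-> le_model d e).
Proof.
move=> _ g_pproc g_sat.
have faces_nz : faces S != set0.
  case: g_pproc => g_nil g_proc; case: g g_nil g_proc {g_sat} => [//|f g] _ g_proc.
  by apply/set0Pn; exists (pimg f [set tt]); apply: (g_proc f (or_introl erefl)) two_face.
exists (union_model (satisfies g)); split; first exact: union_is_model.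
move=> d d_model; rewrite satisfies_g_of //.
by split=> //; apply: satisfies_iff_le_union.
Qed.
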